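(* Let $Y\in\mathbb{R}^{n\times p}$. Suppose either (i) $Y$ is 1-critical for (BM) with a multiplier $\lambda$ (as in the definition of 1-criticality) satisfying $S(\lambda)\in\mathbb{S}^n_+$, or (ii) $Y$ is 2-critical for (BM) and $Y$ is column rank deficient (i.e. $\operatorname{rank} Y<p$). Then $Y$ is a global minimizer of (BM).
   Context: Let $\mathbb{S}^n$ be the space of real symmetric $n\times n$ matrices, with inner product $A\bullet B=\operatorname{trace}(A^TB)$ (also used for $A\in\mathbb{S}^n$, $B\in\mathbb{R}^{n\times n}$), and $\mathbb{S}^n_+$ the cone of positive semidefinite matrices. Let $m=m_1+m_2$, let $C,A_1,\dots,A_m\in\mathbb{S}^n$, $b\in\mathbb{R}^m$, $\mathcal{A}^*(\lambda)=\sum_i\lambda_iA_i$. Let $\mathscr{X}=\{X\in\mathbb{S}^n_+ : A_i\bullet X=b_i \ (i\le m_1),\ A_i\bullet X\ge b_i\ (m_1<i\le m)\}$; assume $\mathscr{X}$ is nonempty and that $\min_{X\in\mathscr{X}} C\bullet X$ is attained. Problem (BM) is $\min_{Y\in\mathbb{R}^{n\times p}} C\bullet YY^T$ subject to $YY^T\in\mathscr{X}$. For $Y$, let $I(Y)=\{i: A_i\bullet YY^T=b_i\}$ and $S(\lambda)=C-\mathcal{A}^*(\lambda)$. A point $Y$ is 1-critical for (BM) with multiplier $\lambda$ if $YY^T\in\mathscr{X}$, $\lambda\in\mathbb{R}^{m_1}\times\mathbb{R}^{m_2}_+$, $\lambda_i=0$ for $i\notin I(Y)$ and $S(\lambda)Y=0$;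 it is 2-critical if moreover $S(\lambda)\bullet UU^T\ge 0$ for all $U\in\mathbb{R}^{n\times p}$ with $A_i\bullet UY^T=0$ for all $i\in I(Y)$. *)

From mathcomp Require Import reals.
From mathcomp Require Import all_boot all_order all_algebra.
Set Implicit Arguments. Unset Strict Implicit. Unset Printing Implicit Defensive.
Import Order.TTheory GRing.Theory Num.Theory.
Local Open Scope ring_scope.

Section BM.
Variable R : realType.

Definition mdot n (A B : 'M[R]_n) : R := \tr (A^T *m B).

Definition symm_mx n (A : 'M[R]_n) : Prop := A^T = A.

Definition psd n (X : 'M[R]_n) : Prop :=
  symm_mx X /\ forall x : 'cV[R]_n, 0 <= (x^T *m X *m x) 0 0.

(* constraint i is an equality iff i < m1 *)
Definition feasible n m1 m2 (A : 'I_(m1 + m2) -> 'M[R]_n) (b : 'I_(m1 + m2) -> R)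
  (X : 'M[R]_n) : Prop :=
  psd X /\ forall i : 'I_(m1 + m2),
    if (i < m1)%N then mdot (A i) X = b i else b i <= mdot (A i) X.

Definition active n m1 m2 (A : 'I_(m1 + m2) -> 'M[R]_n) (b : 'I_(m1 + m2) -> R)
  p (Y : 'M[R]_(n, p)) (i : 'I_(m1 + m2)) : Prop :=
  mdot (A i) (Y *m Y^T) = b i.

Definition Smat n m (C : 'M[R]_n) (A : 'I_m -> 'M[R]_n) (lam : 'I_m -> R) : 'M[R]_n :=
  C - \sum_(i < m) lam i *: A i.

Definition one_critical n m1 m2 (C : 'M[R]_n) (A : 'I_(m1 + m2) -> 'M[R]_n)
  (b : 'I_(m1 + m2) -> R) p (Y : 'M[R]_(n, p)) (lam : 'I_(m1 + m2) -> R) : Prop :=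
  [/\ feasible A b (Y *m Y^T),
      (forall i : 'I_(m1 + m2), (m1 <= i)%N -> 0 <= lam i),
      (forall i, ~ active A b Y i -> lam i = 0)
    & Smat C A lam *m Y = 0].

(* A_i • U Y^T, with the trace inner product extended to non-symmetric matrices *)
Definition two_critical n m1 m2 (C : 'M[R]_n) (A : 'I_(m1 + m2) -> 'M[R]_n)
  (b : 'I_(m1 + m2) -> R) p (Y : 'M[R]_(n, p)) (lam : 'I_(m1 + m2) -> R) : Prop :=
  one_critical C A b Y lam /\
  forall U : 'M[R]_(n, p),
    (forall i, active A b Y i -> mdot (A i) (U *m Y^T) = 0) ->
    0 <= mdot (Smat C A lam) (U *m U^T).

Definition global_min_BM n m1 m2 (C : 'M[R]_n) (A : 'I_(m1 + m2) -> 'M[R]_n)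
  (b : 'I_(m1 + m2) -> R) p (Y : 'M[R]_(n, p)) : Prop :=
  feasible A b (Y *m Y^T) /\
  forall Z : 'M[R]_(n, p), feasible A b (Z *m Z^T) ->
    mdot C (Y *m Y^T) <= mdot C (Z *m Z^T).

End BM.

(** Weak duality: for every feasible X, C • X = S(λ) • X + Σ λ_i (A_i • X) ≥ Σ λ_i b_i,
    using S(λ) ⪰ 0, λ_i ≥ 0 on inequality constraints and feasibility of X; for X = Y Y^T
    both sides agree because S(λ) Y = 0 and λ_i vanishes on inactive constraints.
    In case (ii) a nonzero w with Y w = 0 makes U = x w^T admissible in the second-order
    condition for every x, since U Y^T = 0, and S(λ) • U U^T = |w|^2 x^T S(λ) x, so S(λ) ⪰ 0
    and case (i) applies. *)
From mathcomp Require Import all_boot all_order all_algebra.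
From mathcomp Require Import reals.
Import Order.TTheory GRing.Theory Num.Theory.
Local Open Scope ring_scope.
Set Implicit Arguments. Unset Strict Implicit.

Section TraceProduct.
Variables (R : realType) (n : nat).
Implicit Types (S M N : 'M[R]_n).

Lemma mdotDl S M N : mdot (S + M) N = mdot S N + mdot M N.
Proof. by rewrite /mdot linearD mulmxDl mxtraceD. Qed.

Lemma mdotZl c S N : mdot (c *: S) N = c * mdot S N.
Proof. by rewrite /mdot linearZ -scalemxAl mxtraceZ. Qed.

Lemma mdot_suml m (F : 'I_m -> 'M[R]_n) N :
  mdot (\sum_(i < m) F i) N = \sum_(i < m) mdot (F i) N.
Proof.
elim/big_rec2: _ => [|i x y _ <-]; last by rewrite mdotDl.
by rewrite /mdot linear0 mul0mx linear0.
Qed.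

Lemma mdot0r S : mdot S 0 = 0.
Proof. by rewrite /mdot mulmx0 linear0. Qed.

Lemma mdot_gram p S (Z : 'M[R]_(n, p)) :
  symm_mx S -> mdot S (Z *m Z^T) = \tr (Z^T *m S *m Z).
Proof. by move=> symS; rewrite /mdot symS mulmxA mxtrace_mulC mulmxA. Qed.

Lemma psd_mdot_gram_ge0 p S (Z : 'M[R]_(n, p)) : psd S -> 0 <= mdot S (Z *m Z^T).
Proof.
move=> [symS S_ge0]; rewrite mdot_gram //; apply: sumr_ge0 => j _.
have -> : (Z^T *m S *m Z) j j = ((col j Z)^T *m S *m col j Z) 0 0.
  rewrite !mxE; apply: eq_bigr => k _; rewrite !mxE; congr (_ * _).
  by apply: eq_bigr => l _; rewrite !mxE.
exact: S_ge0.
Qed.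

Lemma mdot_gram_eq0 p S (Y : 'M[R]_(n, p)) :
  symm_mx S -> S *m Y = 0 -> mdot S (Y *m Y^T) = 0.
Proof. by move=> symS SY0; rewrite mdot_gram // -mulmxA SY0 mulmx0 linear0. Qed.

Lemma mdot_gram_rank1 p S (x : 'cV[R]_n) (w : 'rV[R]_p) : symm_mx S ->
  mdot S (x *m w *m (x *m w)^T) = (w *m w^T) 0 0 * (x^T *m S *m x) 0 0.
Proof.
move=> symS; rewrite trmx_mul mulmxA -(mulmxA x) {1}[w *m w^T]mx11_scalar.
rewrite mul_mx_scalar -scalemxAl /mdot -scalemxAr mxtraceZ.
by rewrite mulmxA mxtrace_mulC mulmxA trace_mx11 symS.
Qed.

End TraceProduct.

Section RowVectors.
Variable R : realType.

Lemma rowmx_dot_gt0 p (w : 'rV[R]_p) : w != 0 -> 0 < (w *m w^T) 0 0.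
Proof.
move=> w_neq0; have sq_ge0 j : true -> 0 <= w 0 j * w^T j 0.
  by rewrite mxE -expr2 sqr_ge0.
rewrite mxE lt_def sumr_ge0 // andbT.
apply: contraNneq w_neq0 => /(psumr_eq0P sq_ge0) sq_eq0; apply/eqP/rowP => j.
by have /eqP := sq_eq0 j isT; rewrite !mxE mulf_eq0 orbb => /eqP.
Qed.

Lemma rank_lt_cols_kernel n p (Y : 'M[R]_(n, p)) :
  (\rank Y < p)%N -> exists2 w : 'rV[R]_p, w *m Y^T = 0 & w != 0.
Proof.
move=> rankY; have : kermx Y^T != 0.
  by rewrite -mxrank_eq0 mxrank_ker mxrank_tr -lt0n subn_gt0.
by case/rowV0Pn => w /sub_kermxP; exists w.
Qed.

End RowVectors.

Section Burer_Monteiro.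
Variables (R : realType) (n m1 m2 : nat).
Variables (C : 'M[R]_n) (A : 'I_(m1 + m2) -> 'M[R]_n) (b : 'I_(m1 + m2) -> R).
Implicit Types (lam : 'I_(m1 + m2) -> R).

Lemma symm_Smat lam :
  symm_mx C -> (forall i, symm_mx (A i)) -> symm_mx (Smat C A lam).
Proof.
move=> symC symA; rewrite /symm_mx /Smat linearB /= symC linear_sum /=.
by congr (_ - _); apply: eq_bigr => i _; rewrite linearZ /= symA.
Qed.

Lemma mdot_Smat_split lam X :
  mdot C X = mdot (Smat C A lam) X + \sum_(i < m1 + m2) lam i * mdot (A i) X.
Proof.
transitivity (mdot (Smat C A lam + \sum_i lam i *: A i) X); first by rewrite subrK.
by rewrite mdotDl mdot_suml; congr (_ + _); apply: eq_bigr => i _; rewrite mdotZl.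
Qed.

Lemma one_critical_slack p (Y : 'M[R]_(n, p)) lam i : one_critical C A b Y lam ->
  lam i * mdot (A i) (Y *m Y^T) = lam i * b i.
Proof.
case=> _ _ lam_inactive _.
have [act|nact] := eqVneq (mdot (A i) (Y *m Y^T)) (b i); first by rewrite act.
by rewrite lam_inactive ?mul0r //; apply/eqP.
Qed.

Lemma feasible_multiplier_le lam X i :
  (forall i : 'I_(m1 + m2), (m1 <= i)%N -> 0 <= lam i) -> feasible A b X ->
  lam i * b i <= lam i * mdot (A i) X.
Proof.
move=> lam_ge0 [_ /(_ i)]; case: ifP => [_ -> //|i_ineq le_bA].
by rewrite ler_wpM2l // lam_ge0 // leqNgt i_ineq.
Qed.

Lemma one_critical_psd_global_min p (Y : 'M[R]_(n, p)) lam :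
  one_critical C A b Y lam -> psd (Smat C A lam) -> global_min_BM C A b Y.
Proof.
move=> crit S_psd; have [feasY lam_ge0 _ SY0] := crit.
split=> // Z feasZ; rewrite !(mdot_Smat_split lam) (mdot_gram_eq0 S_psd.1 SY0) add0r.
apply: ler_wpDl; first exact: psd_mdot_gram_ge0.
apply: ler_sum => i _; rewrite (one_critical_slack i crit).
exact: feasible_multiplier_le.
Qed.

Lemma two_critical_rank_deficient_psd p (Y : 'M[R]_(n, p)) lam :
  symm_mx C -> (forall i, symm_mx (A i)) ->
  two_critical C A b Y lam -> (\rank Y < p)%N -> psd (Smat C A lam).
Proof.
move=> symC symA [_ second_order] rankY.
have symS := symm_Smat lam symC symA; split=> // x.
have [w wY0 w_neq0] := rank_lt_cols_kernel rankY.
have xwY0 : x *m w *m Y^T = 0 by rewrite -mulmxA wY0 mulmx0.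
have := second_order (x *m w); rewrite xwY0 mdot_gram_rank1 //.
by move=> /(_ (fun i _ => mdot0r _)); rewrite pmulr_rge0 // rowmx_dot_gt0.
Qed.

End Burer_Monteiro.

Theorem lemma4 (R : realType) (n p m1 m2 : nat)
  (C : 'M[R]_n) (A : 'I_(m1 + m2) -> 'M[R]_n) (b : 'I_(m1 + m2) -> R)
  (HC : symm_mx C) (HA : forall i, symm_mx (A i))
  (Hne : exists X : 'M[R]_n, feasible A b X)
  (Hattain : exists2 X : 'M[R]_n, feasible A b X &
     forall X' : 'M[R]_n, feasible A b X' -> mdot C X <= mdot C X')
  (Y : 'M[R]_(n, p)) :
  ((exists lam : 'I_(m1 + m2) -> R, one_critical C A b Y lam /\ psd (Smat C A lam))
   \/ ((exists lam : 'I_(m1 + m2) -> R, two_critical C A b Y lam) /\ (\rank Y < p)%N)) ->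
  global_min_BM C A b Y.
Proof.
case=> [[lam [crit S_psd]] | [[lam crit2] rankY]].
  exact: one_critical_psd_global_min crit S_psd.
apply: (one_critical_psd_global_min crit2.1).
exact: two_critical_rank_deficient_psd HC HA crit2 rankY.
Qed.
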